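(* Let $H$ be a finite simple undirected graph on $n\ge 2$ vertices, and let $\lambda_1(H)\ge\cdots\ge\lambda_n(H)$ be the eigenvalues of its adjacency matrix. Then \[ \lambda_{n-1}(H)\ge -\frac{n}{3}. \] *)

From HB Require Import structures.
From mathcomp Require Import all_boot all_order all_algebra.
From mathcomp Require Import reals.
Set Implicit Arguments. Unset Strict Implicit. Unset Printing Implicit Defensive.
Import Order.TTheory GRing.Theory Num.Theory.
Local Open Scope ring_scope.

(* A finite simple undirected graph on vertex set 'I_n is a relation
   e : rel 'I_n that is symmetric and irreflexive. Its adjacency matrix: *)
Definition adjmx (R : nzRingType) (n : nat) (e : rel 'I_n) : 'M[R]_n :=
  \matrix_(i, j) (e i j)%:R.

(* s is the list of eigenvalues (with multiplicity) of A:
   the characteristic polynomial of A splits with roots s. *)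
Definition eigenvalue_list (R : comNzRingType) (n : nat) (A : 'M[R]_n) (s : seq R) : Prop :=
  char_poly A = \prod_(x <- s) ('X - x%:P).

From HB Require Import structures.
From mathcomp Require Import all_boot all_order all_algebra.
From mathcomp Require Import reals.
From mathcomp Require Import ring lra complex.
Set Implicit Arguments. Unset Strict Implicit. Unset Printing Implicit Defensive.
Import Order.TTheory GRing.Theory Num.Theory.
Local Open Scope ring_scope.

(* Let u, v be orthonormal eigenvectors for the two smallest eigenvalues, so
   that lambda_(n-1) + lambda_n = sum_ij A_ij p_ij with p_ij = u_i u_j + v_i v_j.
   Since 0 <= A_ij <= 1 and sum_ij p_ij = (sum u)^2 + (sum v)^2 >= 0, this is at
   least -(1/2) sum_ij |p_ij|.  Writing u_k + i v_k = r_k e^(i t_k), we have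
   p_ij = r_i r_j cos (t_i - t_j), and 18 |cos s| <= 12 + 7 cos 2s - cos 4s gives
     18 sum_ij |p_ij| <= 12 |sum_k r_k|^2 + 7 |sum_k r_k e^(2 i t_k)|^2 <= 24 n,
   the last step by Cauchy-Schwarz, using sum_k (u_k + i v_k)^2 = 0.  Hence
   2 lambda_(n-1) >= lambda_(n-1) + lambda_n >= -2n/3. *)

Section Sums.
Variable R : realDomainType.

Lemma sqr_sum (I : finType) (f : I -> R) : (\sum_i f i) ^+ 2 = \sum_i \sum_j f i * f j.
Proof. by rewrite expr2 mulr_suml; apply: eq_bigr => i _; rewrite mulr_sumr. Qed.

Lemma sqr_sum_le n (f : 'I_n -> R) : (\sum_i f i) ^+ 2 <= n%:R * \sum_i f i ^+ 2.
Proof.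
have : 0 <= \sum_i \sum_j (f i - f j) ^+ 2.
  by apply: sumr_ge0 => i _; apply: sumr_ge0 => j _; apply: sqr_ge0.
suff -> : \sum_i \sum_j (f i - f j) ^+ 2 =
    2 * (n%:R * \sum_i f i ^+ 2 - (\sum_i f i) ^+ 2).
  by rewrite pmulr_rge0 // subr_ge0.
transitivity (\sum_i \sum_j (f i ^+ 2 + f j ^+ 2 - 2 * (f i * f j))).
  by apply: eq_bigr => i _; apply: eq_bigr => j _; ring.
rewrite sqr_sum.
under eq_bigr do rewrite sumrB big_split /= sumr_const card_ord -mulr_sumr.
rewrite sumrB big_split /= sumrMnl sumr_const card_ord -mulr_sumr.
by rewrite -mulr_natl; ring.
Qed.

Lemma sum_weighted_sqr_sum (I : finType) (ws : seq (R * (I -> R))) :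
  \sum_i \sum_j \sum_(w <- ws) w.1 * (w.2 i * w.2 j) =
  \sum_(w <- ws) w.1 * (\sum_i w.2 i) ^+ 2.
Proof.
under eq_bigr do rewrite exchange_big /=; rewrite exchange_big /=.
apply: eq_bigr => w _; rewrite sqr_sum mulr_sumr; apply: eq_bigr => i _.
by rewrite mulr_sumr.
Qed.

End Sums.

Section Harmonics.
Variable R : rcfType.
Implicit Types a b c e t x : R.

Definition radius a b := Num.sqrt (a ^+ 2 + b ^+ 2).

(* For (a, b) = r (cos t, sin t) these are r cos 2t, r sin 2t, r cos 4t and
   r sin 4t (all 0 at the origin). *)
Definition rcos2 a b := (a ^+ 2 - b ^+ 2) / radius a b.
Definition rsin2 a b := 2 * a * b / radius a b.
Definition rcos4 a b := (a ^+ 4 - 6 * a ^+ 2 * b ^+ 2 + b ^+ 4) / radius a b ^+ 3.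
Definition rsin4 a b := (4 * a ^+ 3 * b - 4 * a * b ^+ 3) / radius a b ^+ 3.

Lemma sqr_radius a b : radius a b ^+ 2 = a ^+ 2 + b ^+ 2.
Proof. by rewrite sqr_sqrtr // addr_ge0 ?sqr_ge0. Qed.

Lemma radius_eq0 a b : (radius a b == 0) = (a == 0) && (b == 0).
Proof. by rewrite -sqrf_eq0 sqr_radius paddr_eq0 ?sqr_ge0 // !sqrf_eq0. Qed.

Lemma radius0 : radius 0 0 = 0.
Proof. by apply/eqP; rewrite radius_eq0 eqxx. Qed.

Lemma radius_mul_rcos2 a b : radius a b * rcos2 a b = a ^+ 2 - b ^+ 2.
Proof.
have [/eqP|r_neq0] := eqVneq (radius a b) 0; last by rewrite mulrC divfK.
by rewrite radius_eq0 => /andP[/eqP-> /eqP->]; rewrite radius0 mul0r expr0n subrr.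
Qed.

Lemma radius_mul_rsin2 a b : radius a b * rsin2 a b = 2 * a * b.
Proof.
have [/eqP|r_neq0] := eqVneq (radius a b) 0; last by rewrite mulrC divfK.
by rewrite radius_eq0 => /andP[/eqP-> /eqP->]; rewrite radius0 mul0r !mulr0.
Qed.

Lemma sqr_rcos2_rsin2 a b : rcos2 a b ^+ 2 + rsin2 a b ^+ 2 = radius a b ^+ 2.
Proof.
rewrite /rcos2 /rsin2; have [->|r_neq0] := eqVneq (radius a b) 0.
  by rewrite invr0 !mulr0 expr0n addr0.
have -> : radius a b ^+ 2 = (a ^+ 2 + b ^+ 2) ^+ 2 / radius a b ^+ 2.
  by rewrite -sqr_radius [in RHS]expr2 mulfK // sqrf_eq0.
by field.
Qed.

Lemma sqr_dot2_le a b c e : (a * c + b * e) ^+ 2 <= (a ^+ 2 + b ^+ 2) * (c ^+ 2 + e ^+ 2).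
Proof. have := sqr_ge0 (a * e - b * c); nra. Qed.

(* With x = t |cos s| this is 18 |cos s| <= 12 + 7 cos 2s - cos 4s; the
   difference of the two sides factors as 2 (2x - t)^2 (t - x) (x + 2t). *)
Lemma cos_harmonics_ineq x t : 0 <= x -> x <= t ->
  18 * x * t ^+ 3 <= 4 * t ^+ 4 + 22 * x ^+ 2 * t ^+ 2 - 8 * x ^+ 4.
Proof.
move=> x_ge0 x_le_t; rewrite -subr_ge0.
have -> : 4 * t ^+ 4 + 22 * x ^+ 2 * t ^+ 2 - 8 * x ^+ 4 - 18 * x * t ^+ 3 =
   2 * (2 * x - t) ^+ 2 * (t - x) * (x + 2 * t) by ring.
have := sqr_ge0 (2 * x - t); have : 0 <= (t - x) * (x + 2 * t) by nra.
nra.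
Qed.

Lemma radius_harmonic_sqr_le a b x0 x1 x2 :
  (radius a b * x0 + (rcos2 a b * x1 + rsin2 a b * x2)) ^+ 2 <=
  radius a b ^+ 2 * (x0 ^+ 2 + x1 ^+ 2 + x2 ^+ 2)
  + 2 * x0 * (x1 * (a ^+ 2 - b ^+ 2) + x2 * (2 * a * b)).
Proof.
have := sqr_dot2_le (rcos2 a b) (rsin2 a b) x1 x2.
rewrite sqr_rcos2_rsin2 -(radius_mul_rcos2 a b) -(radius_mul_rsin2 a b) => cs.
have -> : (radius a b * x0 + (rcos2 a b * x1 + rsin2 a b * x2)) ^+ 2 =
  radius a b ^+ 2 * x0 ^+ 2 + (rcos2 a b * x1 + rsin2 a b * x2) ^+ 2
  + 2 * x0 * (x1 * (radius a b * rcos2 a b) + x2 * (radius a b * rsin2 a b)) by ring.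
lra.
Qed.

Lemma harmonics_origin a b : radius a b = 0 ->
  [/\ a = 0, b = 0, rcos2 a b = 0, rsin2 a b = 0 & rcos4 a b = 0 /\ rsin4 a b = 0].
Proof.
move=> r0; move/eqP: (r0); rewrite radius_eq0 => /andP[/eqP a0 /eqP b0].
by rewrite /rcos2 /rsin2 /rcos4 /rsin4 r0 expr0n /= invr0 !mulr0.
Qed.

Lemma abs_dot_le_harmonics a b c e :
  18 * `|a * c + b * e| <= 12 * (radius a b * radius c e)
     + 7 * (rcos2 a b * rcos2 c e + rsin2 a b * rsin2 c e)
     - (rcos4 a b * rcos4 c e + rsin4 a b * rsin4 c e).
Proof.
have [/harmonics_origin[-> -> -> -> [-> ->]]|r1] := eqVneq (radius a b) 0.
  by rewrite radius0 !(mul0r, mulr0, addr0, subr0, normr0).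
have [/harmonics_origin[-> -> -> -> [-> ->]]|r2] := eqVneq (radius c e) 0.
  by rewrite radius0 !(mul0r, mulr0, addr0, subr0, normr0).
set p := a * c + b * e; set t := radius a b * radius c e.
have t_gt0 : 0 < t by rewrite mulr_gt0 // lt0r ?r1 ?r2 sqrtr_ge0.
have sqr_t : t ^+ 2 = (a ^+ 2 + b ^+ 2) * (c ^+ 2 + e ^+ 2) by rewrite exprMn !sqr_radius.
have cos2E : rcos2 a b * rcos2 c e + rsin2 a b * rsin2 c e = (2 * p ^+ 2 - t ^+ 2) / t.
  by rewrite sqr_t /rcos2 /rsin2 /t /p; field; rewrite r1 r2.
have cos4E : rcos4 a b * rcos4 c e + rsin4 a b * rsin4 c e =
    (8 * p ^+ 4 - 8 * p ^+ 2 * t ^+ 2 + t ^+ 4) / t ^+ 3.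
  rewrite [t ^+ 4](exprM t 2 2) sqr_t /rcos4 /rsin4 /t /p.
  by field; rewrite r1 r2.
have p_le_t : `|p| <= t.
  have : `|p| ^+ 2 <= t ^+ 2 by rewrite real_normK ?num_real // sqr_t sqr_dot2_le.
  by rewrite ler_sqr ?nnegrE ?normr_ge0 ?(ltW t_gt0).
rewrite cos2E cos4E [p ^+ 4](exprM p 2 2) -(real_normK (num_real p)).
have -> : 12 * t + 7 * ((2 * `|p| ^+ 2 - t ^+ 2) / t) -
    (8 * (`|p| ^+ 2) ^+ 2 - 8 * `|p| ^+ 2 * t ^+ 2 + t ^+ 4) / t ^+ 3 =
    (4 * t ^+ 4 + 22 * `|p| ^+ 2 * t ^+ 2 - 8 * `|p| ^+ 4) / t ^+ 3.
  by field; rewrite gt_eqF.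
by rewrite ler_pdivlMr ?exprn_gt0 // cos_harmonics_ineq.
Qed.

End Harmonics.

Definition dotv (R : nzRingType) n (f g : 'I_n -> R) := \sum_k f k * g k.

Definition normv (R : rcfType) n (f : 'I_n -> R) k := (Num.sqrt (dotv f f))^-1 * f k.

Section DotProduct.
Variables (R : rcfType) (n : nat).
Implicit Types (f g h : 'I_n -> R) (c : R).

Lemma dotvC f g : dotv f g = dotv g f.
Proof. by apply: eq_bigr => k _; rewrite mulrC. Qed.

Lemma dotvZl c f g : dotv (fun k => c * f k) g = c * dotv f g.
Proof. by rewrite /dotv mulr_sumr; apply: eq_bigr => k _; rewrite mulrA. Qed.

Lemma dotvZr c f g : dotv f (fun k => c * g k) = c * dotv f g.
Proof. by rewrite dotvC dotvZl dotvC. Qed.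

Lemma dotvBl f g h : dotv (fun k => f k - g k) h = dotv f h - dotv g h.
Proof. by rewrite /dotv -sumrB; apply: eq_bigr => k _; rewrite mulrBl. Qed.

Lemma dotvv f : dotv f f = \sum_k f k ^+ 2.
Proof. by apply: eq_bigr => k _; rewrite expr2. Qed.

Lemma dotvv_ge0 f : 0 <= dotv f f.
Proof. by rewrite dotvv sumr_ge0 // => k _; rewrite sqr_ge0. Qed.

Lemma dotvv_eq0 f : dotv f f = 0 -> forall k, f k = 0.
Proof.
rewrite dotvv => /psumr_eq0P f0 k; apply/eqP; rewrite -sqrf_eq0.
by rewrite f0 // => i _; rewrite sqr_ge0.
Qed.

Lemma dotv_normv f : dotv f f != 0 -> dotv (normv f) (normv f) = 1.
Proof.
move=> ff_neq0; rewrite dotvZl dotvZr mulrA -invfM -expr2 sqr_sqrtr ?dotvv_ge0 //.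
exact: mulVf.
Qed.

End DotProduct.

Section Orthonormal.
Variables (R : rcfType) (n : nat) (u v : 'I_n -> R).
Hypotheses (u_unit : dotv u u = 1) (v_unit : dotv v v = 1) (uv_orth : dotv u v = 0).

Local Notation r i := (radius (u i) (v i)).
Local Notation c2 i := (rcos2 (u i) (v i)).
Local Notation s2 i := (rsin2 (u i) (v i)).
Local Notation c4 i := (rcos4 (u i) (v i)).
Local Notation s4 i := (rsin4 (u i) (v i)).

Lemma harmonic_energy_le :
  (\sum_i r i) ^+ 2 + (\sum_i c2 i) ^+ 2 + (\sum_i s2 i) ^+ 2 <= 2 * n%:R.
Proof.
set X0 := \sum_i r i; set X1 := \sum_i c2 i; set X2 := \sum_i s2 i.
set S := X0 ^+ 2 + X1 ^+ 2 + X2 ^+ 2.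
pose t i := r i * X0 + (c2 i * X1 + s2 i * X2).
have S_sum : S = \sum_i t i.
  by rewrite /t !big_split /= -!mulr_suml /S -/X0 -/X1 -/X2; ring.
(* With z_k = u_k + i v_k, orthonormality says sum_k z_k^2 = 0: the cross
   terms of the bound on t k ^+ 2 sum to zero. *)
have sum_t_sqr : \sum_i t i ^+ 2 <= 2 * S.
  apply: le_trans (ler_sum _ (fun i _ => radius_harmonic_sqr_le _ _ X0 X1 X2)) _.
  rewrite big_split /= -mulr_suml -mulr_sumr big_split /= -!mulr_sumr sumrB.
  under eq_bigr do rewrite sqr_radius.
  rewrite big_split /= -!dotvv u_unit v_unit subrr.
  under eq_bigr do rewrite -mulrA.
  by rewrite -mulr_sumr -/(dotv u v) uv_orth /S; lra.
have S_ge0 : 0 <= S by rewrite !addr_ge0 ?sqr_ge0.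
have : S ^+ 2 <= n%:R * (2 * S).
  by rewrite S_sum; apply: le_trans (sqr_sum_le t) _; rewrite ler_wpM2l // -S_sum.
have := ler0n R n; nra.
Qed.

Lemma sum_abs_proj2_le : \sum_i \sum_j `|u i * u j + v i * v j| <= 4 * n%:R / 3.
Proof.
pose ws := [:: (12 : R, fun i => r i); (7, fun i => c2 i); (7, fun i => s2 i);
               (-1, fun i => c4 i); (-1, fun i => s4 i)].
have : \sum_i \sum_j 18 * `|u i * u j + v i * v j| <=
       \sum_i \sum_j \sum_(w <- ws) w.1 * (w.2 i * w.2 j).
  apply: ler_sum => i _; apply: ler_sum => j _; rewrite !big_cons big_nil /=.
  by have := abs_dot_le_harmonics (u i) (v i) (u j) (v j); lra.
rewrite sum_weighted_sqr_sum !big_cons big_nil /=.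
under eq_bigr do rewrite -mulr_sumr; rewrite -mulr_sumr.
have := harmonic_energy_le.
have := sqr_ge0 (\sum_i c2 i); have := sqr_ge0 (\sum_i s2 i).
have := sqr_ge0 (\sum_i c4 i); have := sqr_ge0 (\sum_i s4 i).
lra.
Qed.

End Orthonormal.

Lemma char_poly_similar (F : fieldType) n (Q A D : 'M[F]_n) :
  Q \in unitmx -> Q *m A = D *m Q -> char_poly A = char_poly D.
Proof.
move=> Q_unit QA; pose Q' := map_mx polyC Q.
have Q'_char : Q' *m char_poly_mx A = char_poly_mx D *m Q'.
  by rewrite /char_poly_mx mulmxBr mulmxBl -!map_mxM QA scalar_mxC.
apply: (@mulfI _ (\det Q')); first by rewrite det_map_mx polyC_eq0 -unitfE -unitmxE.
by rewrite /char_poly -det_mulmx Q'_char det_mulmx mulrC.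
Qed.

Lemma sorted_ge_count_le (R : realDomainType) (s : seq R) k :
  sorted >=%R s -> (size s - k <= count (fun x => x <= s`_k)%R s)%N.
Proof.
move=> s_sorted; set x := s`_k.
have : all (fun y => y <= x) (drop k s).
  apply/(all_nthP 0) => j; rewrite size_drop nth_drop ltn_subRL => j_lt.
  have ge_trans : transitive (>=%R : rel R) by move=> y z w /[swap]; exact: le_trans.
  apply: (sorted_leq_nth ge_trans (fun y => lexx y) 0 s_sorted); rewrite ?inE ?leq_addr //.
  exact: leq_ltn_trans (leq_addr j k) j_lt.
rewrite all_count => /eqP; rewrite size_drop => <-.
by rewrite -{2}(cat_take_drop k s) count_cat leq_addl.
Qed.

Lemma sym_mx_diagonalizable (R : rcfType) n (A : 'M[R]_n) : A^T = A ->
  exists Q : 'M[R]_n, exists d : 'rV[R]_n, Q \in unitmx /\ Q *m A = diag_mx d *m Q.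
Proof.
move=> A_sym; pose toC := @real_complex R; pose AC := map_mx toC A.
have toC_real x : toC x \is Num.real by apply/complex_realP; exists x.
have AC_real : AC \is a realmx by apply/mxOverP => i j; rewrite mxE.
have AC_herm : AC \is hermsymmx.
  apply: realsym_hermsym AC_real; apply/is_hermitianmxP.
  by rewrite expr0 scale1r map_mx_id // /AC map_trmx A_sym.
have P_unit := spectral_unit AC.
have D_real : diag_mx (spectral_diag AC) \is a realmx.
  apply/mxOverP => i j; rewrite mxE; case: (i == j); last exact: real0.
  by rewrite mulr1n; move/mxOverP: (hermitian_spectral_diag_real AC_herm); apply.
have AC_sim : similar_in unitmx AC (diag_mx (spectral_diag AC)).
  exists (spectralmx AC) => //; apply/(similarLR P_unit).
  rewrite conjumx ?unitmx_inv // invmxK.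
  exact/orthomx_spectralP/hermitian_normalmx.
have [Q' /andP[Q'_real Q'_unit] /(similarP Q'_unit) Q'_sim] :=
  real_similar AC_sim AC_real D_real.
have real_lift p q (m : 'M[complex R]_(p, q)) :
    m \is a realmx -> m = map_mx toC (map_mx (@complex.Re R) m).
  move=> /mxOverP m_real; apply/matrixP => i j; rewrite !mxE.
  by have /complex_realP[x ->] := m_real i j.
exists (map_mx (@complex.Re R) Q'), (map_mx (@complex.Re R) (spectral_diag AC)); split.
  by rewrite -(map_unitmx toC) -real_lift.
apply: (@map_mx_inj _ _ toC); rewrite !map_mxM map_diag_mx -!real_lift //.
exact: hermitian_spectral_diag_real.
Qed.

Definition qform (R : nzRingType) n (A : 'M[R]_n) (f g : 'I_n -> R) :=
  \sum_i \sum_j A i j * (f i * g j).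

Definition eigvec (R : nzRingType) n (A : 'M[R]_n) (f : 'I_n -> R) a :=
  forall j, \sum_k f k * A k j = a * f j.

Section SymmetricEigvec.
Variables (R : rcfType) (n : nat) (A : 'M[R]_n).
Hypothesis A_sym : forall i j, A i j = A j i.
Implicit Types (f g x y : 'I_n -> R) (a b c : R).

Lemma qform_eigvecl f g a : eigvec A f a -> qform A f g = a * dotv f g.
Proof.
move=> f_eig; rewrite /qform exchange_big /dotv mulr_sumr; apply: eq_bigr => j _.
rewrite mulrA -f_eig mulr_suml; apply: eq_bigr => i _; ring.
Qed.

Lemma qform_eigvecr f g b : eigvec A g b -> qform A f g = b * dotv f g.
Proof.
move=> g_eig; rewrite /qform /dotv mulr_sumr; apply: eq_bigr => i _.
rewrite mulrCA -g_eig mulr_sumr; apply: eq_bigr => j _; rewrite A_sym; ring.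
Qed.

Lemma eigvec_orth f g a b : eigvec A f a -> eigvec A g b -> a != b -> dotv f g = 0.
Proof.
move=> f_eig g_eig a_neq_b; apply/eqP.
have := qform_eigvecr f g_eig; rewrite (qform_eigvecl _ f_eig) => /eqP.
by rewrite -subr_eq0 -mulrBl mulf_eq0 subr_eq0 (negbTE a_neq_b).
Qed.

Lemma eigvecZ f a c : eigvec A f a -> eigvec A (fun k => c * f k) a.
Proof.
move=> f_eig j; rewrite mulrCA -f_eig mulr_sumr.
by apply: eq_bigr => k _; rewrite mulrA.
Qed.

(* One Gram-Schmidt step stays inside the eigenspace of y: when the two
   eigenvalues differ, y is already orthogonal to x. *)
Lemma eigvec_sub_proj x y a b : eigvec A x a -> eigvec A y b ->
  eigvec A (fun k => y k - dotv y x / dotv x x * x k) b.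
Proof.
move=> x_eig y_eig; have [a_eq_b|a_neq_b] := eqVneq a b.
  rewrite a_eq_b in x_eig => j.
  rewrite mulrBr -(eigvecZ (dotv y x / dotv x x) x_eig j) -y_eig -sumrB.
  by apply: eq_bigr => k _; rewrite mulrBl.
rewrite dotvC (eigvec_orth x_eig y_eig a_neq_b) mul0r => j.
by under eq_bigr do rewrite mul0r subr0; rewrite mul0r subr0.
Qed.

Lemma orthonormal_eigvec2 x y a b : eigvec A x a -> eigvec A y b ->
  (forall c e, (forall k, c * x k + e * y k = 0) -> c = 0 /\ e = 0) ->
  exists u v, [/\ dotv u u = 1, dotv v v = 1, dotv u v = 0
                 & qform A u u + qform A v v = a + b].
Proof.
move=> x_eig y_eig xy_free; pose c := dotv y x / dotv x x.
pose y' k := y k - c * x k.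
have x_neq0 : dotv x x != 0.
  apply/eqP => /dotvv_eq0 x0.
  have comb0 k : 1 * x k + 0 * y k = 0 by rewrite x0 mulr0 mul0r addr0.
  by have [/eqP] := xy_free 1 0 comb0; rewrite oner_eq0.
have y'_neq0 : dotv y' y' != 0.
  apply/eqP => /dotvv_eq0 y'0.
  have comb0 k : - c * x k + 1 * y k = 0 by rewrite mulNr mul1r addrC; exact: y'0.
  by have [_ /eqP] := xy_free (- c) 1 comb0; rewrite oner_eq0.
have y'_eig : eigvec A y' b := eigvec_sub_proj x_eig y_eig.
have x_y' : dotv x y' = 0 by rewrite dotvC dotvBl dotvZl divfK // subrr.
exists (normv x), (normv y'); split; rewrite ?dotv_normv //.
  by rewrite dotvZl dotvZr x_y' !mulr0.
rewrite (qform_eigvecl _ (eigvecZ _ x_eig)) (qform_eigvecl _ (eigvecZ _ y'_eig)).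
by rewrite !dotv_normv // !mulr1.
Qed.

End SymmetricEigvec.

Lemma row_eigvec (R : nzRingType) n (A Q : 'M[R]_n) d i :
  Q *m A = diag_mx d *m Q -> eigvec A (fun k => Q i k) (d 0 i).
Proof.
by move=> QA j; have := congr1 (fun M : 'M_n => M i j) QA; rewrite /= mxE mul_diag_mx mxE.
Qed.

Lemma unitmx_rows_free (F : fieldType) n (Q : 'M[F]_n) i1 i2 c e :
  Q \in unitmx -> i1 != i2 -> (forall k, c * Q i1 k + e * Q i2 k = 0) -> c = 0 /\ e = 0.
Proof.
move=> Q_unit i12 comb0; pose w : 'rV[F]_n := c *: delta_mx 0 i1 + e *: delta_mx 0 i2.
have : w *m Q = 0.
  by apply/rowP => k; rewrite mulmxDl -!scalemxAl -!rowE !mxE comb0.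
move/eqP; rewrite mulmx_free_eq0 ?row_free_unit // => /eqP/rowP w0.
have := w0 i1; have := w0 i2; rewrite !mxE !eqxx eq_sym (negbTE i12) /=.
by rewrite !(mulr1, mulr0, addr0, add0r) => -> ->.
Qed.

Lemma sym_orthonormal_pair (R : rcfType) n (A : 'M[R]_n) (s : seq R) :
  (2 <= n)%N -> (forall i j, A i j = A j i) -> eigenvalue_list A s -> sorted >=%R s ->
  exists u v, [/\ dotv u u = 1, dotv v v = 1, dotv u v = 0
                 & qform A u u + qform A v v <= 2 * s`_(n - 2)].
Proof.
move=> n_ge2 A_sym A_eig s_sorted.
have [Q [d [Q_unit QA]]] : exists Q d, Q \in unitmx /\ Q *m A = diag_mx d *m Q.
  by apply: sym_mx_diagonalizable; apply/matrixP => i j; rewrite mxE A_sym.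
have s_perm : perm_eq s [seq d 0 i | i <- enum 'I_n].
  apply: prod_XsubC_eq; rewrite -A_eig (char_poly_similar Q_unit QA).
  rewrite char_poly_trig ?diag_mx_is_trig // big_map big_enum /=.
  by apply: eq_bigr => i _; rewrite mxE eqxx mulr1n.
have : (1 < #|[pred i | (d 0 i <= s`_(n - 2))%R]|)%N.
  have := sorted_ge_count_le (n - 2) s_sorted.
  rewrite (perm_size s_perm) size_map size_enum_ord subKn // (permP s_perm) count_map.
  by rewrite enumT cardE /enum_mem size_filter.
case/card_gt1P => i1 [i2 [le1 le2 i12]].
have [u [v [uu vv uv q_eq]]] := orthonormal_eigvec2 A_sym (row_eigvec i1 QA)
  (row_eigvec i2 QA) (fun c e => unitmx_rows_free Q_unit i12).
by exists u, v; split => //; move: le1 le2; rewrite q_eq !inE; lra.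
Qed.

Lemma qform_pair_ge (R : realFieldType) n (A : 'M[R]_n) (u v : 'I_n -> R) :
  (forall i j, 0 <= A i j <= 1) ->
  - (\sum_i \sum_j `|u i * u j + v i * v j|) / 2 <= qform A u u + qform A v v.
Proof.
move=> A01; pose p i j := u i * u j + v i * v j.
have : \sum_i \sum_j (p i j - `|p i j|) / 2 <= qform A u u + qform A v v.
  rewrite /qform -big_split; apply: ler_sum => i _; rewrite -big_split /=.
  apply: ler_sum => j _; rewrite -mulrDr -/(p i j); have /andP[A_ge0 A_le1] := A01 i j.
  by have [p_ge0|p_lt0] := lerP 0 (p i j); [rewrite ger0_norm | rewrite ltr0_norm]; nra.
have sum_p : \sum_i \sum_j p i j = (\sum_i u i) ^+ 2 + (\sum_i v i) ^+ 2.
  by rewrite !sqr_sum -big_split; apply: eq_bigr => i _; rewrite -big_split.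
under eq_bigr do rewrite -mulr_suml sumrB; rewrite -mulr_suml sumrB sum_p.
by have := sqr_ge0 (\sum_i u i); have := sqr_ge0 (\sum_i v i); lra.
Qed.

Theorem corollary2p2 (R : realType) (n : nat) (e : rel 'I_n) (s : seq R) :
  (2 <= n)%N -> symmetric e -> irreflexive e ->
  eigenvalue_list (adjmx R e) s -> sorted >=%R s ->
  - (n%:R / 3) <= s`_(n - 2).
Proof.
move=> n_ge2 e_sym _ A_eig s_sorted.
have A_sym i j : adjmx R e i j = adjmx R e j i by rewrite !mxE e_sym.
have A01 i j : 0 <= adjmx R e i j <= 1 by rewrite mxE; case: (e i j); rewrite ?lexx ?ler01.
have [u [v [uu vv uv q_le]]] := sym_orthonormal_pair n_ge2 A_sym A_eig s_sorted.
have := qform_pair_ge u v A01; have := sum_abs_proj2_le uu vv uv.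
lra.
Qed.
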